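(* Let $q$ be a prime power, let $m,n\ge 1$ with $\gcd(n,q^m-1)=1$. Let $l(x)=\sum_{v=0}^{m} b_v x^{q^v}\in\mathbb{F}_q[x]$ be such that $\bar l(x)=\sum_{v=0}^m b_v x^v$ is a primitive polynomial of degree $m$ over $\mathbb{F}_q$ with $\bar l(x)\neq x-1$, and let $f(x)$ be an irreducible polynomial of degree $n$ over $\mathbb{F}_q$. Setting $b_u=0$ for $u>m$, define for $0\le i\le n-1$ $$c_i=\sum_{u=0}^{\lfloor (m+1)/n\rfloor} b_{i+nu}.$$ Suppose there is an index $i\in\{0,\ldots,n-1\}$ with $c_i\neq 0$ and $c_j=0$ for all $j\in\{0,\dots,n-1\}$, $j\ne i$. Then the polynomial $$F(x)=\frac{f\big(c_i^{-1}l(x)\big)}{f(x)}$$ of degree $n(q^m-1)$ is irreducible over $\mathbb{F}_q$.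
   Context: A primitive polynomial of degree $m$ over $\mathbb{F}_q$ is a monic irreducible polynomial of degree $m$ whose roots generate the multiplicative group $\mathbb{F}_{q^m}^*$. *)

From HB Require Import structures.
From mathcomp Require Import all_boot all_order all_algebra all_fingroup all_field.
Set Implicit Arguments. Unset Strict Implicit. Unset Printing Implicit Defensive.
Import GRing.Theory.
Local Open Scope ring_scope.

Definition primitive_polyq {F : finFieldType} (m : nat) (p : {poly F}) : Prop :=
  [/\ p \is monic, irreducible_poly p, size p = m.+1 &
      forall (L : fieldExtType F) (z : L),
        root (map_poly (in_alg L) p) z -> ((#|F| ^ m - 1)%N).-primitive_root z].

Definition linearized {F : finFieldType} (m : nat) (lbar : {poly F}) : {poly F} :=
  \sum_(v < m.+1) lbar`_v *: 'X^(#|F| ^ v).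

Definition cfold {F : finFieldType} (m n : nat) (lbar : {poly F}) (i : nat) : F :=
  \sum_(u < ((m + 1) %/ n).+1) lbar`_(i + n * u).

(* Let [b] be a root of [G %/ f], where [G = f (c^-1 l(x))], and let [d] be its
   degree over [F_q].  On [F_(q^n)] the q-associate [l] agrees with [c_i x^(q^i)],
   because [x^(q^(i + n u)) = x^(q^i)] there; hence [f] divides [G], and
   [g = c^-1 l(b)] is a root of [f], so [g] lies in [F_(q^n)] and [n] divides [d].
   The element [e = b^(q^n) - b] is nonzero (otherwise [b] is a double root of [G],
   against the separability of [f]) and is killed by [l], since
   [l(e) = c (g^(q^n) - g) = 0].  Writing [d = n k], [b^(q^d) = b] shows that [e] is
   also killed by the q-associate of [1 + x^n + ... + x^(n(k-1))].  As [lbar] is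
   irreducible it divides that polynomial, hence [x^(nk) - 1]; so the order
   [q^m - 1] of a root of [lbar] divides [nk], hence [k].  Thus
   [d >= n (q^m - 1) = deg (G %/ f)] for every root, and [G %/ f] is irreducible. *)

From HB Require Import structures.
From mathcomp Require Import all_boot all_order all_algebra all_fingroup all_field.
Import GRing.Theory.
Local Open Scope ring_scope.

Set Implicit Arguments.
Unset Strict Implicit.
Unset Printing Implicit Defensive.

Section FiniteField.
Variable F : finFieldType.
Local Notation q := #|F|.

Lemma pchar_nat_card : [pchar F].-nat q.
Proof.
have [p p_pr pchar_p] := finPcharP F.
by rewrite (card_pprimeChar pchar_p) pnatX (pnatE _ p_pr) pchar_p.
Qed.

Lemma natr_card : (q%:R : F) = 0.
Proof.
have [p p_pr pchar_p] := finPcharP F.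
apply/eqP; rewrite -(dvdn_pcharf pchar_p).
have := finNzRing_gt1 F; have := card_pprimeChar pchar_p.
by case: (logn _ _) => [|e] -> //; rewrite expnS dvdn_mulr.
Qed.

Lemma expf_card_pow (a : F) k : a ^+ (q ^ k) = a.
Proof.
elim: k => [|k IHk]; first by rewrite expr1.
by rewrite expnSr exprM IHk expf_card.
Qed.

Lemma card_expn_sub1_gt0 m : (0 < m)%N -> (0 < q ^ m - 1)%N.
Proof. by move=> m_gt0; rewrite subn_gt0 -{1}(exp1n m) ltn_exp2r ?finNzRing_gt1. Qed.

End FiniteField.

Section Frobenius.
Variables (F : finFieldType) (L : fieldExtType F).
Local Notation q := #|F|.

Definition frobq k (x : L) := x ^+ (q ^ k).

Lemma frobq_is_zmod_morphism k : zmod_morphism (frobq k).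
Proof.
have qk_nat : [pchar L].-nat (q ^ k)%N.
  by rewrite (eq_pnat _ (pchar_lalg L)) pnatX pchar_nat_card.
by move=> x y; rewrite /frobq exprDn_pchar // exprNn_pchar.
Qed.

Lemma frobq_is_monoid_morphism k : monoid_morphism (frobq k).
Proof. by split=> [|x y]; rewrite /frobq ?exprMn ?expr1n. Qed.

HB.instance Definition _ k :=
  GRing.isZmodMorphism.Build L L (frobq k) (frobq_is_zmod_morphism k).
HB.instance Definition _ k :=
  GRing.isMonoidMorphism.Build L L (frobq k) (frobq_is_monoid_morphism k).

Lemma frobq0 x : frobq 0 x = x.
Proof. by rewrite /frobq expr1. Qed.

Lemma frobqD j k x : frobq (j + k) x = frobq j (frobq k x).
Proof. by rewrite /frobq addnC expnD exprM. Qed.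

Lemma frobq_alg k (a : F) : frobq k a%:A = a%:A.
Proof. by rewrite /frobq -in_algE -rmorphXn expf_card_pow. Qed.

Lemma frobqZ k (a : F) x : frobq k (a *: x) = a *: frobq k x.
Proof. by rewrite -mulr_algl rmorphM /= frobq_alg mulr_algl. Qed.

Lemma frobq_eq0 k x : (frobq k x == 0) = (x == 0).
Proof. by rewrite /frobq expf_eq0 expn_gt0 ltnW ?finNzRing_gt1. Qed.

Lemma horner_frobq k (p : {poly F}) x :
  (map_poly (in_alg L) p).[frobq k x] = frobq k (map_poly (in_alg L) p).[x].
Proof.
rewrite -horner_map -map_poly_comp; congr _.[_].
by apply: eq_map_poly => a /=; rewrite frobq_alg.
Qed.

Lemma frobq_periodic n t x : frobq n x = x -> frobq (n * t) x = x.
Proof.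
move=> fix_x; elim: t => [|t IHt]; first by rewrite muln0 frobq0.
by rewrite mulnSr frobqD fix_x.
Qed.

End Frobenius.

Section MinimalPolynomial.
Variables (F : fieldType) (L : fieldExtType F).

Lemma minPoly_irreducible_root (p : {poly F}) (x : L) :
  irreducible_poly p -> root (map_poly (in_alg L) p) x ->
  minPoly 1 x %= map_poly (in_alg L) p.
Proof.
move=> [_ irr_p] px; have /polyOver1P[r Dr] := minPolyOver 1%AS x.
have r_dvd_p : r %| p.
  by rewrite -(dvdp_map (in_alg L)) -Dr minPoly_dvdp ?alg_polyOver.
have size_r : size r != 1 by rewrite -(size_map_poly (in_alg L)) -Dr size_minPoly.
by rewrite Dr eqp_map irr_p.
Qed.

Lemma dim_adjoin_irreducible_root (p : {poly F}) (x : L) :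
  irreducible_poly p -> root (map_poly (in_alg L) p) x ->
  \dim <<1; x>> = (size p).-1.
Proof.
move=> irr_p px; rewrite dim_Fadjoin dimv1 muln1 -(size_map_poly (in_alg L)).
by rewrite -(eqp_size (minPoly_irreducible_root irr_p px)) size_minPoly.
Qed.

Lemma dvdn_dim_adjoin (x y : L) : y \in <<1; x>>%VS -> (\dim <<1; y>> %| \dim <<1; x>>)%N.
Proof. by move=> y_x; rewrite field_dimS // sub_adjoin1v. Qed.

End MinimalPolynomial.

Section FiniteFieldExtension.
Variables (F : finFieldType) (L : fieldExtType F).

Lemma frobq_dim_adjoin (x : L) : frobq (\dim <<1; x>>) x = x.
Proof.
by apply/eqP; rewrite /frobq -[_ == x](Fermat's_little_theorem <<1; x>>%AS) memv_adjoin.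
Qed.

Lemma frobq_irreducible_root (p : {poly F}) (x : L) :
  irreducible_poly p -> root (map_poly (in_alg L) p) x -> frobq (size p).-1 x = x.
Proof. by move=> irr_p px; rewrite -(dim_adjoin_irreducible_root irr_p px) frobq_dim_adjoin. Qed.

End FiniteFieldExtension.

Lemma irreducible_separable (F : finFieldType) (p : {poly F}) :
  irreducible_poly p -> separable_poly p.
Proof.
move=> irr_p; have [L _ [x px _]] := irredp_FAdjoin irr_p.
pose sL := FinSplittingFieldType F L.
have /and3P[_ /separableP sep _] := finField_galois (subvf (1%AS : {subfield sL})).
rewrite -(separable_map (in_alg L)) -(eqp_separable (minPoly_irreducible_root irr_p px)).
exact: sep x (memvf x).
Qed.

Lemma irreducible_root_dim (F : finFieldType) (p : {poly F}) : (1 < size p)%N ->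
  (forall (L : fieldExtType F) (x : L),
     root (map_poly (in_alg L) p) x -> ((size p).-1 <= \dim <<1; x>>)%N) ->
  irreducible_poly p.
Proof.
move=> p_gt1 dim_ge; split=> // r size_r r_dvd_p.
have p_neq0 : p != 0 by rewrite -size_poly_eq0 -lt0n ltnW.
have r_neq0 : r != 0 by apply: contraNneq p_neq0 => r0; rewrite -dvd0p -r0.
have [L [rs Ers _]] := FinSplittingFieldFor p_neq0.
have /dvdp_prod_XsubC[msk Er] : map_poly (in_alg L) r %| \prod_(z <- rs) ('X - z%:P).
  by rewrite -(eqp_dvdr _ Ers) dvdp_map.
have [x rx] : exists x, root (map_poly (in_alg L) r) x.
  move: Er; case: (mask msk rs) => [|x s] Er.
    by move: size_r; rewrite -(size_map_poly (in_alg L)) (eqp_size Er) big_nil size_poly1.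
  by exists x; rewrite (eqp_root Er) root_prod_XsubC mem_head.
have px : root (map_poly (in_alg L) p) x by apply: root_dvdp rx; rewrite dvdp_map.
have lt_dim_r : (\dim <<1; x>> < size r)%N.
  rewrite dim_Fadjoin dimv1 muln1 -[size r](size_map_poly (in_alg L)) -size_minPoly.
  by rewrite dvdp_leq ?map_poly_eq0 // minPoly_dvdp ?alg_polyOver.
rewrite -dvdp_size_eqp // eqn_leq dvdp_leq //= -(prednK (ltnW p_gt1)).
exact: leq_ltn_trans (dim_ge L x px) lt_dim_r.
Qed.

Section LinearizedAssociate.
Variables (F : finFieldType) (L : fieldExtType F).
Implicit Types (p r u : {poly F}) (a : F) (x y : L).

Definition linq p y := \sum_(v < size p) p`_v *: frobq v y.

Lemma linq_widen p N y : (size p <= N)%N -> linq p y = \sum_(v < N) p`_v *: frobq v y.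
Proof.
move=> le_pN; rewrite /linq -(subnKC le_pN) big_split_ord /=.
by rewrite [X in _ + X]big1 ?addr0 // => v _; rewrite nth_default ?scale0r ?leq_addr.
Qed.

Lemma linq_is_zmod_morphism p : zmod_morphism (linq p).
Proof.
by move=> x y; rewrite /linq -sumrB; apply: eq_bigr => v _; rewrite rmorphB scalerBr.
Qed.

HB.instance Definition _ p :=
  GRing.isZmodMorphism.Build L L (linq p) (linq_is_zmod_morphism p).

Lemma linq_frobq p k y : linq p (frobq k y) = frobq k (linq p y).
Proof.
rewrite /linq rmorph_sum; apply: eq_bigr => v _ /=.
by rewrite frobqZ -!frobqD addnC.
Qed.

Lemma linq0 y : linq 0 y = 0.
Proof. by rewrite /linq size_poly0 big_ord0. Qed.

Lemma linqD p r y : linq (p + r) y = linq p y + linq r y.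
Proof.
pose N := maxn (size p) (size r).
rewrite !(@linq_widen _ N) ?leq_maxl ?leq_maxr ?(leq_trans (size_polyD _ _)) //.
by rewrite -big_split; apply: eq_bigr => v _; rewrite coefD scalerDl.
Qed.

Lemma linqZ a p y : linq (a *: p) y = a *: linq p y.
Proof.
rewrite (@linq_widen _ (size p)) ?size_scale_leq // scaler_sumr.
by apply: eq_bigr => v _; rewrite coefZ scalerA.
Qed.

Lemma linq_mulX p y : linq (p * 'X) y = frobq 1 (linq p y).
Proof.
rewrite (@linq_widen _ (size p).+1); last first.
  by rewrite (leq_trans (size_mul_leq _ _)) // size_polyX addn2.
rewrite big_ord_recl coefMX eqxx scale0r add0r -linq_frobq /linq.
by apply: eq_bigr => v _; rewrite coefMX -frobqD addn1.
Qed.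

Lemma linqC a y : linq a%:P y = a *: y.
Proof. by rewrite (@linq_widen _ 1) ?size_polyC_leq1 // big_ord1 coefC frobq0. Qed.

Lemma linqXn k y : linq 'X^k y = frobq k y.
Proof.
rewrite /linq size_polyXn (bigD1 ord_max) //= coefXn eqxx scale1r big1 ?addr0 //.
by move=> v; rewrite -val_eqE /= coefXn => /negbTE->; rewrite scale0r.
Qed.

Lemma linqM u p y : linq (u * p) y = linq u (linq p y).
Proof.
elim/poly_ind: u => [|u a IHu]; first by rewrite mul0r !linq0.
by rewrite mulrDl mulrAC mul_polyC !linqD !linq_mulX linqZ IHu linqC.
Qed.

Lemma linq_sum I (s : seq I) (P : pred I) (p_ : I -> {poly F}) y :
  linq (\sum_(j <- s | P j) p_ j) y = \sum_(j <- s | P j) linq (p_ j) y.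
Proof. exact: (big_morph (linq^~ y) (fun p r => linqD p r y) (linq0 y)). Qed.

Lemma linq_gcdp_eq0 p r y : linq p y = 0 -> linq r y = 0 -> linq (gcdp p r) y = 0.
Proof.
move=> py ry; have [[u v] /= /eqpP[[a b] /= /andP[a_neq0 b_neq0] E]] := Bezoutp p r.
apply: (scalerI b_neq0); rewrite scaler0 -linqZ -E linqZ linqD !linqM py ry.
by rewrite !raddf0 addr0 scaler0.
Qed.

Lemma irreducible_dvdp_linq p r y : irreducible_poly p -> y != 0 ->
  linq p y = 0 -> linq r y = 0 -> p %| r.
Proof.
move=> irr_p y_neq0 py ry; rewrite -[p %| r]negbK -irreducible_poly_coprime //.
apply: contra y_neq0; rewrite coprimep_def => /size_poly1P[a a_neq0 Dg].
by have /eqP := linq_gcdp_eq0 py ry; rewrite Dg linqC scaler_eq0 (negbTE a_neq0).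
Qed.

End LinearizedAssociate.

Lemma sumr_blocks (V : nmodType) n K (G : nat -> V) :
  \sum_(u < K) \sum_(j < n) G (j + n * u)%N = \sum_(w < n * K) G w.
Proof.
elim: K => [|K IHK]; first by rewrite muln0 !big_ord0.
rewrite big_ord_recr /= IHK mulnS addnC -!(big_mkord xpredT).
rewrite (big_cat_nat _ (leq_addr n (n * K))) //=; congr (_ + _).
by rewrite -{2}[(n * K)%N]add0n big_addn addKn big_mkord.
Qed.

Section Linearized.
Variable F : finFieldType.
Local Notation q := #|F|.
Implicit Types (m n : nat) (p : {poly F}).

Lemma size_linearized m p : p \is monic -> size p = m.+1 ->
  size (linearized m p) = (q ^ m).+1.
Proof.
move=> /monicP; rewrite lead_coefE => + size_p; rewrite size_p /= => lead_p.
rewrite /linearized big_ord_recr /= lead_p scale1r addrC size_polyDl size_polyXn //.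
rewrite ltnS (leq_trans (size_sum _ _ _)) //; apply/bigmax_leqP => v _.
rewrite (leq_trans (size_scale_leq _ _)) // size_polyXn.
by rewrite ltn_exp2l ?finNzRing_gt1.
Qed.

Lemma deriv_linearized m p : (linearized m p)^`() = (p`_0)%:P.
Proof.
rewrite /linearized raddf_sum big_ord_recl big1 ?addr0 => [|v _] /=.
  by rewrite derivZ expn0 derivX alg_polyC.
by rewrite derivZ derivXn -scaler_nat natrX natr_card expr0n scale0r scaler0.
Qed.

Lemma horner_linearized (L : fieldExtType F) m p (y : L) : (size p <= m.+1)%N ->
  (map_poly (in_alg L) (linearized m p)).[y] = linq p y.
Proof.
move=> le_pm; rewrite (linq_widen _ le_pm) /linearized rmorph_sum horner_sum.
by apply: eq_bigr => v _ /=; rewrite map_polyZ map_polyXn hornerZ hornerXn mulr_algl.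
Qed.

Lemma linq_cfold (L : fieldExtType F) m n p (y : L) :
  (0 < n)%N -> (size p <= m.+1)%N -> frobq n y = y ->
  linq p y = \sum_(j < n) cfold m n p j *: frobq j y.
Proof.
move=> n_gt0 le_pm fix_y; set K := ((m + 1) %/ n).+1.
have -> : \sum_(j < n) cfold m n p j *: frobq j y =
    \sum_(j < n) \sum_(u < K) p`_(j + n * u) *: frobq (j + n * u) y.
  apply: eq_bigr => j _; rewrite /cfold scaler_suml; apply: eq_bigr => u _.
  by rewrite frobqD frobq_periodic.
rewrite exchange_big /= (sumr_blocks _ _ (fun w => p`_w *: frobq w y)).
apply: linq_widen; rewrite (leq_trans le_pm) // mulnC -addn1.
exact/ltnW/ltn_ceil.
Qed.

End Linearized.

Section PrimitivePolynomial.
Variables (F : finFieldType) (m : nat) (p : {poly F}).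
Hypothesis p_prim : primitive_polyq m p.
Local Notation q := #|F|.

Lemma primitive_coef0_neq0 : (0 < m)%N -> p`_0 != 0.
Proof.
move=> m_gt0; case: p_prim => _ p_irr _ p_roots.
have [L _ _] := irredp_FAdjoin p_irr.
apply/eqP => p0; have /prim_expr_order : ((q ^ m - 1)%N).-primitive_root (0 : L).
  by apply: p_roots; rewrite /root horner_coef0 coef_map /= p0 scale0r.
rewrite expr0n eqn0Ngt card_expn_sub1_gt0 // => /eqP.
by rewrite eq_sym oner_eq0.
Qed.

Lemma primitive_dvdp_Xn_sub1 N : p %| 'X^N - 1 -> (q ^ m - 1 %| N)%N.
Proof.
move=> p_dvd; case: p_prim => _ p_irr _ p_roots.
have [L _ [z pz _]] := irredp_FAdjoin p_irr.
rewrite (prim_order_dvd (p_roots L z pz)) -subr_eq0.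
have : root (map_poly (in_alg L) ('X^N - 1)) z by apply: root_dvdp pz; rewrite dvdp_map.
by rewrite rmorphB rmorph1 /= map_polyXn /root hornerD hornerN hornerXn hornerC.
Qed.

End PrimitivePolynomial.

Section LinearizedComposition.
Variables (F : finFieldType) (m n : nat) (lbar f : {poly F}) (i : nat).
Hypotheses (m_gt0 : (0 < m)%N) (n_gt0 : (0 < n)%N).
Hypothesis coprime_n : coprime n (#|F| ^ m - 1).
Hypotheses (lbar_prim : primitive_polyq m lbar) (f_irr : irreducible_poly f).
Hypothesis size_f : size f = n.+1.
Hypotheses (lt_i_n : (i < n)%N) (c_neq0 : cfold m n lbar i != 0).
Hypothesis cfold_eq0 : forall j, (j < n)%N -> j != i -> cfold m n lbar j = 0.

Local Notation q := #|F|.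
Local Notation c := (cfold m n lbar i).
Local Notation Lp := (c^-1 *: linearized m lbar).
Local Notation G := (f \Po Lp).

Let lbar_monic : lbar \is monic. Proof. by case: lbar_prim. Qed.
Let size_lbar : size lbar = m.+1. Proof. by case: lbar_prim. Qed.

Lemma horner_Lp_frobq_fixed (L : fieldExtType F) (y : L) :
  frobq n y = y -> (map_poly (in_alg L) Lp).[y] = frobq i y.
Proof.
move=> fix_y; rewrite map_polyZ hornerZ horner_linearized ?size_lbar //.
rewrite (linq_cfold n_gt0 (eq_leq size_lbar) fix_y) // (bigD1 (Ordinal lt_i_n)) //=.
rewrite big1 ?addr0 => [|j /= j_neq_i]; last by rewrite cfold_eq0 ?scale0r.
by rewrite mulr_algl scalerA mulVf // scale1r.
Qed.

Lemma dvdp_f_comp : f %| G.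
Proof.
rewrite -[f %| G]negbK -irreducible_poly_coprime //; apply/negP => f_G_coprime.
have [L _ [a fa _]] := irredp_FAdjoin f_irr.
have fix_a : frobq n a = a by have := frobq_irreducible_root f_irr fa; rewrite size_f.
have /coprimep_root/(_ fa) : coprimep (map_poly (in_alg L) f) (map_poly (in_alg L) G).
  by rewrite coprimep_map.
rewrite map_comp_poly horner_comp horner_Lp_frobq_fixed //.
by rewrite horner_frobq (rootP fa) rmorph0 eqxx.
Qed.

Lemma size_comp_quotient : size (G %/ f) = (n * (q ^ m - 1)).+1.
Proof.
have size_G : size G = (n * q ^ m).+1.
  have size_G1 : (size G).-1 = (n * q ^ m)%N.
    by rewrite size_comp_poly size_f size_scale ?invr_eq0 // (size_linearized lbar_monic).
  have : (0 < (size G).-1)%N.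
    by rewrite size_G1 muln_gt0 n_gt0 expn_gt0 ltnW ?finNzRing_gt1.
  by rewrite -size_G1; case: (size G).
rewrite size_divp ?irredp_neq0 // size_G size_f /= mulnBr muln1 subSn //.
by rewrite leq_pmulr // expn_gt0 ltnW ?finNzRing_gt1.
Qed.

Section RootOfQuotient.
Variables (L : fieldExtType F) (b : L).
Hypothesis root_b : root (map_poly (in_alg L) (G %/ f)) b.

Local Notation g := ((map_poly (in_alg L) Lp).[b]).
Local Notation d := (\dim <<1; b>>).

Lemma root_f_Lp : root (map_poly (in_alg L) f) g.
Proof.
have : root (map_poly (in_alg L) G) b by rewrite -(divpK dvdp_f_comp) rmorphM rootM root_b.
by rewrite map_comp_poly /root horner_comp.
Qed.

Lemma frobq_Lp : frobq n g = g.
Proof. by have := frobq_irreducible_root f_irr root_f_Lp; rewrite size_f. Qed.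

Lemma dvdn_dim_adjoin_root : (n %| d)%N.
Proof.
have := dim_adjoin_irreducible_root f_irr root_f_Lp; rewrite size_f /= => <-.
by rewrite dvdn_dim_adjoin // mempx_Fadjoin ?alg_polyOver.
Qed.

(* Otherwise [b] is a common root of [f] and [G %/ f], hence a root of
   [G^`() = (f^`() \Po Lp) * (c^-1 * lbar`_0)], which the separability of [f]
   and [lbar`_0 != 0] forbid. *)
Lemma frobq_root_neq : frobq n b != b.
Proof.
apply/eqP => fix_b; have g_frob : g = frobq i b := horner_Lp_frobq_fixed fix_b.
have f_b : root (map_poly (in_alg L) f) b.
  by move: root_f_Lp; rewrite g_frob /root horner_frobq frobq_eq0.
have : (map_poly (in_alg L) G^`()).[b] = 0.
  rewrite -(divpK dvdp_f_comp) derivM rmorphD !rmorphM /= hornerD !hornerM.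
  by rewrite (rootP f_b) (rootP root_b) mulr0 mul0r addr0.
rewrite deriv_comp derivZ deriv_linearized rmorphM /= hornerM map_comp_poly horner_comp.
rewrite g_frob horner_frobq map_polyZ map_polyC hornerZ hornerC /= => /eqP.
rewrite !mulf_eq0 frobq_eq0 !scaler_eq0 oner_eq0 !orbF invr_eq0 (negbTE c_neq0).
rewrite (negbTE (primitive_coef0_neq0 lbar_prim m_gt0)) !orbF; apply/negP.
have : coprimep (map_poly (in_alg L) f) (map_poly (in_alg L) f^`()).
  by rewrite coprimep_map; have := irreducible_separable f_irr; rewrite unlock.
by move/coprimep_root; apply.
Qed.

Lemma linq_frobq_sub : linq lbar (frobq n b - b) = 0.
Proof.
have linq_b : linq lbar b = c *: g.
  rewrite map_polyZ hornerZ horner_linearized ?size_lbar //.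
  by rewrite mulr_algl scalerA divff // scale1r.
by rewrite raddfB /= linq_frobq linq_b frobqZ frobq_Lp subrr.
Qed.

Lemma sum_frobq_frobq_sub : \sum_(t < d %/ n) frobq (n * t) (frobq n b - b) = 0.
Proof.
rewrite -(big_mkord xpredT (fun t => frobq (n * t) (frobq n b - b))).
under eq_bigr => t _ do rewrite rmorphB /= -frobqD -mulnSr.
rewrite telescope_sumr // muln0 frobq0 mulnC divnK ?dvdn_dim_adjoin_root //.
by rewrite frobq_dim_adjoin subrr.
Qed.

Lemma lbar_dvdp_Xn_sub1 : lbar %| 'X^(n * (d %/ n)) - 1.
Proof.
have sum_root : linq (\sum_(t < d %/ n) 'X^n ^+ t) (frobq n b - b) = 0.
  rewrite linq_sum -[RHS]sum_frobq_frobq_sub; apply: eq_bigr => t _.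
  by rewrite -exprM linqXn.
have lbar_irr : irreducible_poly lbar by case: lbar_prim.
have := irreducible_dvdp_linq lbar_irr _ linq_frobq_sub sum_root.
rewrite subr_eq0 frobq_root_neq => /(_ isT) lbar_dvd_sum.
by rewrite exprM subrX1 dvdp_mull.
Qed.

Lemma dim_adjoin_root_ge : (n * (q ^ m - 1) <= d)%N.
Proof.
have := primitive_dvdp_Xn_sub1 lbar_prim lbar_dvdp_Xn_sub1.
rewrite Gauss_dvdr 1?coprime_sym // => dvd_qm.
rewrite -[d](divnK dvdn_dim_adjoin_root) mulnC leq_mul2r dvdn_leq ?orbT //.
by rewrite divn_gt0 // dvdn_leq ?adim_gt0 ?dvdn_dim_adjoin_root.
Qed.

End RootOfQuotient.

Lemma irreducible_comp_quotient : irreducible_poly (G %/ f).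
Proof.
apply: irreducible_root_dim => [|L b root_b]; rewrite size_comp_quotient.
- by rewrite ltnS muln_gt0 n_gt0 card_expn_sub1_gt0.
- exact: dim_adjoin_root_ge.
Qed.

End LinearizedComposition.

Theorem mainTheorem8 (F : finFieldType) (m n : nat) (lbar f : {poly F}) (i : nat) :
  (0 < m)%N -> (0 < n)%N ->
  coprime n (#|F| ^ m - 1) ->
  primitive_polyq m lbar -> lbar != 'X - 1 ->
  irreducible_poly f -> size f = n.+1 ->
  (i < n)%N -> cfold m n lbar i != 0 ->
  (forall j : nat, (j < n)%N -> j != i -> cfold m n lbar j = 0) ->
  let Fx := (f \Po ((cfold m n lbar i)^-1 *: linearized m lbar)) %/ f in
  size Fx = (n * (#|F| ^ m - 1)).+1 /\ irreducible_poly Fx.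
Proof.
move=> m_gt0 n_gt0 coprime_n lbar_prim _ f_irr size_f lt_i_n c_neq0 cfold_eq0 Fx.
by split; [exact: size_comp_quotient | exact: irreducible_comp_quotient].
Qed.
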